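(* Let $\sigma$ be an erasing $k$-block substitution with $w_\epsilon\neq 1^k$ that satisfies the optimality condition. Then $f_\sigma:\mathbb I\to\mathbb I$ is surjective.
   Context: Notation: $\mathbb I=[0,1]$. $\{0,1\}^*$ and $\{0,1\}^\omega$ denote finite and infinite binary words, and $\epsilon$ is the empty word. For a finite or infinite word $w$, set $0.w=\sum_{i=1}^{|w|}w_i2^{-i}$. For $x\in(0,1]$, $\widetilde x\in\{0,1\}^\omega$ denotes the unique infinite binary expansion of $x$ that does not end in $0^\infty$. Fix $k\ge 2$. An erasing $k$-block substitution is a map $\sigma:\{0,1\}^k\to\{0,1\}^*$ with exactly one block $w_\epsilon$ satisfying $\sigma(w_\epsilon)=\epsilon$; all other blocks have nonempty images. The map $\sigma$ acts on infinite words (and on finite words of length a multiple of $k$) by cutting them into consecutive $k$-blocks and concatenating the images of the blocks. The induced interval map $f_\sigma:\mathbb I\to\mathbb I$ is defined by $f_\sigma(x)=0.\sigma(\widetilde x)$ if $x\in(0,1]$ and $\widetilde x\ne w_\epsilon^\infty$, and $f_\sigma(x)=0$ if $x=0$ or $\widetilde x=w_\epsilon^\infty$. Here $\sigma(\widetilde x)$ may be a finite word. Optimality condition (OC): every $w\in\{0,1\}^\omega$ can be written as an infinite concatenation $w=\prod_{i=1}^\infty\sigma(b_i)$ with blocks $b_i\in\{0,1\}^k$ satisfying $\sigma(b_i)\ne\epsilon$. *)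

From Stdlib Require Import Reals Lra Lia List Arith ClassicalEpsilon.
From Coquelicot Require Import Coquelicot.
Open Scope R_scope.

Definition bit (b : bool) : R := if b then 1 else 0.

(* 0.u for a finite word u: sum_{i=1}^{|u|} u_i 2^{-i} *)
Fixpoint word_val (u : list bool) : R :=
  match u with
  | nil => 0
  | b :: u' => (bit b + word_val u') / 2
  end.

(* 0.w for an infinite word w: sum_{i>=1} w_i 2^{-i} (w indexed from 0) *)
Definition stream_val (w : nat -> bool) : R :=
  Series (fun n => bit (w n) / 2 ^ (S n)).

Fixpoint offset (u : nat -> list bool) (i : nat) : nat :=
  match i with
  | O => O
  | S i' => (offset u i' + length (u i'))%nat
  end.

(* 0.(u_0 u_1 u_2 ...) for the (finite or infinite) concatenation of the
   finite words u_i: the factor u_i occupies positions offset u i, ... *)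
Definition concat_val (u : nat -> list bool) : R :=
  Series (fun i => word_val (u i) / 2 ^ (offset u i)).

Definition block (k : nat) (w : nat -> bool) (i : nat) : list bool :=
  map (fun j => w (i * k + j)%nat) (seq 0 k).

Definition sigma_val (k : nat) (sigma : list bool -> list bool)
  (w : nat -> bool) : R :=
  concat_val (fun i => sigma (block k w i)).

Definition is_tilde_expansion (x : R) (w : nat -> bool) : Prop :=
  (forall N, exists n, (N <= n)%nat /\ w n = true) /\ stream_val w = x.

(* tilde x: the (unique, for x in (0,1]) infinite expansion not ending in 0^oo *)
Definition tilde (x : R) : nat -> bool :=
  epsilon (inhabits (fun _ : nat => false)) (is_tilde_expansion x).

Definition is_periodic_word (k : nat) (u : list bool) (w : nat -> bool) : Prop :=
  forall n, w n = nth (n mod k) u false.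

Definition erasing_block_subst (k : nat) (sigma : list bool -> list bool)
  (weps : list bool) : Prop :=
  (2 <= k)%nat /\ length weps = k /\ sigma weps = nil /\
  (forall b, length b = k -> sigma b = nil -> b = weps).

(* Induced interval map f_sigma (only values on [0,1] matter) *)
Definition f_sigma (k : nat) (sigma : list bool -> list bool)
  (weps : list bool) (x : R) : R :=
  if Req_EM_T x 0 then 0
  else if excluded_middle_informative (is_periodic_word k weps (tilde x)) then 0
  else sigma_val k sigma (tilde x).

Definition optimality_condition (k : nat) (sigma : list bool -> list bool) : Prop :=
  forall w : nat -> bool,
    exists b : nat -> list bool,
      (forall i, length (b i) = k /\ sigma (b i) <> nil) /\
      (forall i j, (j < length (sigma (b i)))%nat ->
         w (offset (fun i' => sigma (b i')) i + j)%nat = nth j (sigma (b i)) false).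

From Stdlib Require Import Reals Lra Lia List ClassicalEpsilon FunctionalExtensionality.
From Coquelicot Require Import Coquelicot.
Open Scope R_scope.

(* For y = 0 take x = 0.  For y in (0,1] let w be a binary expansion of y
   (the greedy one).  The optimality condition writes w as
   sigma(b_0) sigma(b_1) ... with non-erased blocks b_i.  Interleaving the
   erased block gives the word v = b_0 w_eps b_1 w_eps ..., with
   sigma(v) = w and hence 0.sigma(v) = y.  Each b_i differs from w_eps, so
   each pair b_i w_eps contains a 1: v has infinitely many ones and is
   therefore the expansion tilde x of x = 0.v, and v <> w_eps^oo since its
   first block is b_0.  Hence f_sigma(x) = y. *)

(** * Binary expansions *)

Definition shift (n : nat) (w : nat -> bool) : nat -> bool := fun m => w (n + m)%nat.

Definition inf_ones (w : nat -> bool) : Prop :=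
  forall N, exists n, (N <= n)%nat /\ w n = true.

Lemma bit_range b : 0 <= bit b <= 1.
Proof. destruct b; simpl; lra. Qed.

Lemma is_series_half_powers : is_series (fun n => / 2 ^ S n) 1.
Proof.
  assert (Hgeom := is_series_geom (/ 2) ltac:(rewrite Rabs_pos_eq; lra)).
  replace 1 with (/ 2 * / (1 - / 2)) by field.
  eapply is_series_ext; [| exact (is_series_scal_l (/ 2) _ _ Hgeom)].
  intro n. simpl. rewrite pow_inv. unfold scal; simpl; unfold mult; simpl.
  field. apply pow_nonzero; lra.
Qed.

Lemma digit_term_range w n : 0 <= bit (w n) / 2 ^ S n <= / 2 ^ S n.
Proof.
  pose proof (bit_range (w n)).
  assert (0 < / 2 ^ S n) by (apply Rinv_0_lt_compat, pow_lt; lra).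
  unfold Rdiv. split; [apply Rmult_le_pos; lra|].
  rewrite <- (Rmult_1_l (/ 2 ^ S n)) at 2. apply Rmult_le_compat_r; lra.
Qed.

Lemma ex_series_digits w : ex_series (fun n => bit (w n) / 2 ^ S n).
Proof.
  apply (@ex_series_le R_AbsRing R_CompleteNormedModule _ (fun n => / 2 ^ S n)).
  - intro n. change (Rabs (bit (w n) / 2 ^ S n) <= / 2 ^ S n).
    pose proof (digit_term_range w n). rewrite Rabs_pos_eq; lra.
  - eexists; apply is_series_half_powers.
Qed.

Lemma stream_val_range w : 0 <= stream_val w <= 1.
Proof.
  unfold stream_val. split.
  - replace 0 with (Series (fun n => 0 * (/ 2 ^ S n)))
      by (rewrite Series_scal_l; ring).
    apply Series_le; [| apply ex_series_digits].
    intro n. pose proof (digit_term_range w n). lra.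
  - rewrite <- (is_series_unique _ _ is_series_half_powers).
    apply Series_le; [apply digit_term_range | eexists; apply is_series_half_powers].
Qed.

Lemma stream_val_cons w : stream_val w = (bit (w 0%nat) + stream_val (shift 1 w)) / 2.
Proof.
  unfold stream_val. rewrite Series_incr_1 by apply ex_series_digits.
  rewrite (Series_ext _ (fun n => / 2 * (bit (shift 1 w n) / 2 ^ S n))).
  - rewrite Series_scal_l. simpl. field.
  - intro n. unfold shift. simpl. field. apply pow_nonzero; lra.
Qed.

Fixpoint prefix (w : nat -> bool) (N : nat) : list bool :=
  match N with
  | O => nil
  | S N' => w O :: prefix (shift 1 w) N'
  end.

Lemma stream_val_prefix w N :
  stream_val w = word_val (prefix w N) + stream_val (shift N w) / 2 ^ N.
Proof.
  revert w; induction N as [|N IH]; intro w.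
  - simpl. change (shift 0 w) with w. lra.
  - rewrite stream_val_cons, (IH (shift 1 w)). simpl.
    change (shift N (shift 1 w)) with (shift (S N) w).
    field. apply pow_nonzero; lra.
Qed.

Lemma stream_val_prefix_error w M :
  0 <= stream_val w - word_val (prefix w M) <= / 2 ^ M.
Proof.
  rewrite (stream_val_prefix w M).
  pose proof (stream_val_range (shift M w)).
  assert (0 < / 2 ^ M) by (apply Rinv_0_lt_compat, pow_lt; lra).
  replace (word_val (prefix w M) + stream_val (shift M w) / 2 ^ M - word_val (prefix w M))
    with (stream_val (shift M w) * / 2 ^ M) by (unfold Rdiv; ring).
  split; [apply Rmult_le_pos; lra|].
  rewrite <- (Rmult_1_l (/ 2 ^ M)) at 2. apply Rmult_le_compat_r; lra.
Qed.

Lemma stream_val_pos w n : w n = true -> 0 < stream_val w.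
Proof.
  intro Hn.
  pose proof (stream_val_prefix_error w n) as Herr.
  pose proof (stream_val_prefix_error w (S n)) as Herr'.
  assert (Hlast : word_val (prefix w (S n)) = word_val (prefix w n) + / 2 ^ S n).
  { clear -Hn. revert w Hn; induction n as [|n IH]; intros w Hn.
    - simpl. rewrite Hn. simpl. field.
    - change (word_val (prefix w (S (S n))))
        with ((bit (w 0%nat) + word_val (prefix (shift 1 w) (S n))) / 2).
      rewrite (IH (shift 1 w) Hn). simpl. field. apply pow_nonzero; lra. }
  assert (Hpref : 0 <= word_val (prefix w n)).
  { clear. revert w; induction n as [|n IH]; intro w; simpl; [lra|].
    pose proof (bit_range (w 0%nat)). pose proof (IH (shift 1 w)). lra. }
  assert (0 < / 2 ^ S n) by (apply Rinv_0_lt_compat, pow_lt; lra).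
  lra.
Qed.

Lemma inf_ones_shift w m : inf_ones w -> inf_ones (shift m w).
Proof.
  intros H N. destruct (H (m + N)%nat) as [n [Hn Hw]].
  exists (n - m)%nat. unfold shift. split; [lia|].
  replace (m + (n - m))%nat with n by lia. exact Hw.
Qed.

(* 0.1w > 1/2 >= 0.0w' when w has infinitely many ones. *)
Lemma stream_val_lt_head w w' :
  inf_ones w -> w 0%nat = true -> w' 0%nat = false -> stream_val w' < stream_val w.
Proof.
  intros Hw H1 H0. rewrite (stream_val_cons w), (stream_val_cons w'), H1, H0.
  destruct (Hw 1%nat) as [m [Hm Hwm]].
  assert (0 < stream_val (shift 1 w)).
  { apply (stream_val_pos _ (m - 1)). unfold shift.
    replace (1 + (m - 1))%nat with m by lia. exact Hwm. }
  pose proof (stream_val_range (shift 1 w')). simpl. lra.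
Qed.

Lemma stream_val_neq_head w w' :
  inf_ones w -> inf_ones w' -> w 0%nat <> w' 0%nat -> stream_val w <> stream_val w'.
Proof.
  intros Hw Hw' Hd.
  destruct (w 0%nat) eqn:E, (w' 0%nat) eqn:E'; try congruence.
  - apply Rgt_not_eq, stream_val_lt_head; assumption.
  - apply Rlt_not_eq, stream_val_lt_head; assumption.
Qed.

Lemma stream_val_neq n : forall w w',
  inf_ones w -> inf_ones w' -> w n <> w' n -> stream_val w <> stream_val w'.
Proof.
  induction n as [|n IH]; intros w w' Hw Hw' Hd; [now apply stream_val_neq_head|].
  destruct (Bool.bool_dec (w 0%nat) (w' 0%nat)) as [E|E];
    [| now apply stream_val_neq_head].
  rewrite (stream_val_cons w), (stream_val_cons w'), E. intro Heq.
  apply (IH (shift 1 w) (shift 1 w')); try apply inf_ones_shift; auto. lra.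
Qed.

Lemma stream_val_inj w w' :
  inf_ones w -> inf_ones w' -> stream_val w = stream_val w' -> w = w'.
Proof.
  intros Hw Hw' E. apply functional_extensionality. intro n.
  destruct (Bool.bool_dec (w n) (w' n)) as [|Hd]; [assumption|].
  exfalso. exact (stream_val_neq n w w' Hw Hw' Hd E).
Qed.

Lemma tilde_stream_val w : inf_ones w -> tilde (stream_val w) = w.
Proof.
  intro Hw.
  assert (Htilde : is_tilde_expansion (stream_val w) (tilde (stream_val w))).
  { unfold tilde. apply epsilon_spec. exists w. split; [exact Hw | reflexivity]. }
  destruct Htilde as [Hones Hval]. exact (stream_val_inj _ _ Hones Hw Hval).
Qed.

Definition greedy_digit (r : R) : bool := if Rle_dec 1 (2 * r) then true else false.

Definition greedy_rest (r : R) : R := 2 * r - bit (greedy_digit r).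

Fixpoint greedy (r : R) (n : nat) : bool :=
  match n with
  | O => greedy_digit r
  | S n' => greedy (greedy_rest r) n'
  end.

Lemma greedy_rest_range r : 0 <= r <= 1 -> 0 <= greedy_rest r <= 1.
Proof. unfold greedy_rest, greedy_digit. destruct (Rle_dec 1 (2 * r)); simpl; lra. Qed.

Lemma greedy_error_step r :
  stream_val (greedy r) - r = (stream_val (greedy (greedy_rest r)) - greedy_rest r) / 2.
Proof.
  rewrite stream_val_cons. change (shift 1 (greedy r)) with (greedy (greedy_rest r)).
  unfold greedy_rest. simpl. field.
Qed.

Lemma greedy_error n : forall r, 0 <= r <= 1 -> Rabs (stream_val (greedy r) - r) <= / 2 ^ n.
Proof.
  induction n as [|n IH]; intros r Hr.
  - pose proof (stream_val_range (greedy r)). simpl. rewrite Rinv_1. apply Rabs_le. lra.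
  - rewrite greedy_error_step. unfold Rdiv. rewrite Rabs_mult, (Rabs_pos_eq (/ 2)) by lra.
    simpl. rewrite Rinv_mult, (Rmult_comm (/ 2)).
    apply Rmult_le_compat_r; [lra | apply IH, greedy_rest_range, Hr].
Qed.

Lemma le_all_half_powers_eq0 a : (forall n, Rabs a <= / 2 ^ n) -> a = 0.
Proof.
  intro H. destruct (Req_dec a 0) as [|Hne]; [assumption|]. exfalso.
  destruct (pow_lt_1_zero (/ 2) ltac:(rewrite Rabs_pos_eq; lra) (Rabs a)
              (Rabs_pos_lt a Hne)) as [N HN].
  specialize (HN N (le_n _)). specialize (H N). rewrite <- pow_inv in H.
  rewrite Rabs_pos_eq in HN by (apply pow_le; lra). lra.
Qed.

Lemma greedy_val r : 0 <= r <= 1 -> stream_val (greedy r) = r.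
Proof.
  intro Hr. enough (stream_val (greedy r) - r = 0) by lra.
  apply le_all_half_powers_eq0. intro n. now apply greedy_error.
Qed.

(** * Values of concatenations *)

Lemma word_val_app u v : word_val (u ++ v) = word_val u + word_val v / 2 ^ length u.
Proof.
  induction u as [|a u IH]; simpl; [field|].
  rewrite IH. field. apply pow_nonzero; lra.
Qed.

Fixpoint concat_first (u : nat -> list bool) (I : nat) : list bool :=
  match I with
  | O => nil
  | S I' => concat_first u I' ++ u I'
  end.

Lemma length_concat_first u I : length (concat_first u I) = offset u I.
Proof. induction I as [|I IH]; simpl; [reflexivity|]. rewrite length_app, IH. reflexivity. Qed.

Lemma concat_val_partial_sum u I :
  sum_n (fun i => word_val (u i) / 2 ^ offset u i) I = word_val (concat_first u (S I)).
Proof.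
  induction I as [|I IH].
  - rewrite sum_O. simpl. field.
  - rewrite sum_Sn, IH. change (concat_first u (S (S I))) with (concat_first u (S I) ++ u (S I)).
    rewrite word_val_app, length_concat_first. reflexivity.
Qed.

Lemma offset_mono u i j : (i <= j)%nat -> (offset u i <= offset u j)%nat.
Proof. induction 1; simpl; lia. Qed.

(* The infinite word w is spelled by the concatenation u 0 u 1 u 2 ...
   (this is the second clause of the optimality condition). *)
Definition spells (u : nat -> list bool) (w : nat -> bool) : Prop :=
  forall i j, (j < length (u i))%nat -> w (offset u i + j)%nat = nth j (u i) false.

Lemma prefix_add w a c : prefix w (a + c) = prefix w a ++ prefix (shift a w) c.
Proof. revert w; induction a as [|a IH]; intro w; simpl; [reflexivity|]. now rewrite IH. Qed.

Lemma prefix_of_word x : forall w,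
  (forall j, (j < length x)%nat -> w j = nth j x false) -> prefix w (length x) = x.
Proof.
  induction x as [|a x IH]; intros w H; simpl; [reflexivity|].
  rewrite (H 0%nat) by (simpl; lia). f_equal. apply IH.
  intros j Hj. apply (H (S j)). simpl; lia.
Qed.

Lemma concat_first_prefix u w : spells u w -> forall I, concat_first u I = prefix w (offset u I).
Proof.
  intros H I. induction I as [|I IH]; simpl; [reflexivity|].
  rewrite IH, prefix_add. f_equal. symmetry. apply prefix_of_word.
  intros j Hj. apply H, Hj.
Qed.

Lemma concat_val_spells u w :
  spells u w -> (forall N, exists I, (N <= offset u I)%nat) -> concat_val u = stream_val w.
Proof.
  intros Hsp Hunb. unfold concat_val. apply is_series_unique.
  change (is_lim_seq (sum_n (fun i => word_val (u i) / 2 ^ offset u i)) (stream_val w)).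
  apply is_lim_seq_spec. intro eps.
  destruct (pow_lt_1_zero (/ 2) ltac:(rewrite Rabs_pos_eq; lra) eps (cond_pos eps)) as [N HN].
  specialize (HN N (le_n _)). rewrite Rabs_pos_eq, pow_inv in HN by (apply pow_le; lra).
  destruct (Hunb N) as [I0 HI0]. exists I0. intros n Hn.
  rewrite concat_val_partial_sum, (concat_first_prefix u w Hsp).
  set (M := offset u (S n)).
  assert (HM : (N <= M)%nat) by (pose proof (offset_mono u I0 (S n) ltac:(lia)); unfold M; lia).
  assert (/ 2 ^ M <= / 2 ^ N) by (apply Rinv_le_contravar; [apply pow_lt | apply Rle_pow]; lra || lia).
  pose proof (stream_val_prefix_error w M).
  rewrite Rabs_minus_sym, Rabs_pos_eq; lra.
Qed.

(** * Words built from k-blocks *)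

Definition from_blocks (k : nat) (c : nat -> list bool) : nat -> bool :=
  fun n => nth (n mod k)%nat (c (n / k)%nat) false.

Lemma from_blocks_at k c i p : (p < k)%nat -> from_blocks k c (i * k + p)%nat = nth p (c i) false.
Proof.
  intro Hp. unfold from_blocks.
  rewrite Nat.div_add_l, Nat.div_small, Nat.add_0_r by lia.
  rewrite Nat.add_comm, Nat.Div0.mod_add, Nat.mod_small by lia. reflexivity.
Qed.

Lemma block_of_letters k w i l :
  length l = k -> (forall j, (j < k)%nat -> w (i * k + j)%nat = nth j l false) -> block k w i = l.
Proof.
  intros Hl H. unfold block. apply nth_ext with (d := false) (d' := false).
  - now rewrite length_map, length_seq.
  - intros j Hj. rewrite length_map, length_seq in Hj.
    rewrite nth_indep with (d' := w (i * k + 0)%nat) by (now rewrite length_map, length_seq).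
    rewrite (map_nth (fun j0 => w (i * k + j0)%nat) (seq 0 k) 0%nat j), seq_nth by exact Hj.
    apply H, Hj.
Qed.

Lemma block_from_blocks k c i : (forall i, length (c i) = k) -> block k (from_blocks k c) i = c i.
Proof. intro Hc. apply block_of_letters; [apply Hc | intros j Hj; now apply from_blocks_at]. Qed.

Lemma sigma_val_from_blocks k sigma c :
  (forall i, length (c i) = k) ->
  sigma_val k sigma (from_blocks k c) = concat_val (fun i => sigma (c i)).
Proof.
  intro Hc. unfold sigma_val. f_equal. apply functional_extensionality. intro i.
  now rewrite block_from_blocks.
Qed.

Lemma periodic_first_block k u w : length u = k -> is_periodic_word k u w -> block k w 0 = u.
Proof.
  intros Hu Hper. apply block_of_letters; [exact Hu|].
  intros j Hj. rewrite Hper. f_equal. apply Nat.mod_small. simpl; lia.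
Qed.

Lemma distinct_words_one : forall l l', length l = length l' -> l <> l' ->
  exists p, (p < length l)%nat /\ (nth p l false = true \/ nth p l' false = true).
Proof.
  induction l as [|a l IH]; intros [|a' l'] Hlen Hne; simpl in Hlen; try discriminate.
  - congruence.
  - destruct a.
    + exists 0%nat. simpl. split; [lia | now left].
    + destruct a'; [exists 0%nat; simpl; split; [lia | now right]|].
      assert (Hne' : l <> l') by congruence.
      destruct (IH l' ltac:(lia) Hne') as [p [Hp Hone]].
      exists (S p). simpl. split; [lia | exact Hone].
Qed.

(** * Interleaving the erased block *)

Definition interleave (b : nat -> list bool) (e : list bool) (i : nat) : list bool :=
  if Nat.even i then b (Nat.div2 i) else e.

Lemma interleave_even b e m : interleave b e (2 * m) = b m.
Proof. unfold interleave. now rewrite Nat.even_even, Nat.div2_double. Qed.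

Lemma interleave_odd b e m : interleave b e (2 * m + 1) = e.
Proof. unfold interleave. now rewrite Nat.even_odd. Qed.

Section Interleaving.

Variables (sigma : list bool -> list bool) (weps : list bool) (b : nat -> list bool).
Hypothesis weps_erased : sigma weps = nil.

Lemma offset_interleave m :
  offset (fun i => sigma (interleave b weps i)) (2 * m) = offset (fun i => sigma (b i)) m.
Proof.
  induction m as [|m IH]; [reflexivity|].
  replace (2 * S m)%nat with (S (S (2 * m))) by lia. cbn [offset].
  rewrite IH, interleave_even.
  replace (S (2 * m)) with (2 * m + 1)%nat by lia.
  rewrite interleave_odd, weps_erased. simpl. lia.
Qed.

Lemma spells_interleave w :
  spells (fun i => sigma (b i)) w -> spells (fun i => sigma (interleave b weps i)) w.
Proof.
  intros Hsp i j Hj. destruct (Nat.Even_or_Odd i) as [[m ->]|[m ->]].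
  - rewrite offset_interleave. rewrite interleave_even in *. now apply Hsp.
  - rewrite interleave_odd, weps_erased in Hj. simpl in Hj. lia.
Qed.

Lemma offset_interleave_unbounded :
  (forall i, sigma (b i) <> nil) ->
  forall N, exists I, (N <= offset (fun i => sigma (interleave b weps i)) I)%nat.
Proof.
  intros Hne N. exists (2 * N)%nat. rewrite offset_interleave.
  induction N as [|N IH]; simpl; [lia|].
  destruct (sigma (b N)) eqn:E; [contradiction (Hne N) | simpl; lia].
Qed.

(* Each pair b m, weps contains a 1, so the interleaved word has infinitely
   many ones as soon as no b m equals weps. *)
Lemma inf_ones_interleave k :
  length weps = k -> (forall i, length (b i) = k /\ b i <> weps) ->
  inf_ones (from_blocks k (interleave b weps)).
Proof.
  intros Hweps Hb N. destruct (Hb N) as [HbN Hne].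
  destruct (distinct_words_one (b N) weps ltac:(congruence) Hne) as [p [Hp [Hone|Hone]]];
    rewrite HbN in Hp.
  - exists (2 * N * k + p)%nat. split; [nia|].
    now rewrite from_blocks_at, interleave_even.
  - exists ((2 * N + 1) * k + p)%nat. split; [nia|].
    now rewrite from_blocks_at, interleave_odd.
Qed.

End Interleaving.

Theorem lemma3p1 (k : nat) (sigma : list bool -> list bool) (weps : list bool) :
  erasing_block_subst k sigma weps ->
  weps <> repeat true k ->
  optimality_condition k sigma ->
  forall y : R, 0 <= y <= 1 ->
    exists x : R, 0 <= x <= 1 /\ f_sigma k sigma weps x = y.
Proof.
  intros [_ [Hlen [Herased _]]] _ OC y Hy.
  destruct (Req_dec y 0) as [->|Hy0].
  { exists 0. split; [lra|]. unfold f_sigma. now destruct (Req_EM_T 0 0). }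
  destruct (OC (greedy y)) as [b [Hb Hspells]].
  assert (Hbk : forall i, length (b i) = k /\ b i <> weps).
  { intro i. destruct (Hb i) as [Hl Hne]. split; [exact Hl|].
    intro E. rewrite E, Herased in Hne. contradiction. }
  assert (Hclen : forall i, length (interleave b weps i) = k).
  { intro i. unfold interleave. destruct (Nat.even i); [apply Hbk | exact Hlen]. }
  set (v := from_blocks k (interleave b weps)).
  assert (Hv : inf_ones v) by exact (inf_ones_interleave weps b k Hlen Hbk).
  exists (stream_val v). split; [apply stream_val_range|].
  unfold f_sigma. rewrite (tilde_stream_val v Hv).
  destruct (Req_EM_T (stream_val v) 0) as [E|_].
  { destruct (Hv 0%nat) as [n [_ Hn]]. pose proof (stream_val_pos v n Hn). lra. }
  destruct (excluded_middle_informative (is_periodic_word k weps v)) as [Hper|_].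
  { exfalso. apply (Hbk 0%nat).
    rewrite <- (periodic_first_block k weps v Hlen Hper).
    unfold v. rewrite block_from_blocks by exact Hclen. reflexivity. }
  unfold v. rewrite sigma_val_from_blocks by exact Hclen.
  rewrite <- (greedy_val y Hy). apply concat_val_spells.
  - now apply spells_interleave.
  - apply offset_interleave_unbounded; [exact Herased | intro i; apply Hb].
Qed.
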